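(* Let $\mathcal{S}$ be a sound and refutationally complete saturation system. Then for all natural numbers $0<n<m$, the system $\mathcal{S}+\mathrm{Literal}\text{-}\mathrm{AIND}^R_2$ refutes neither the clause set $\mathcal{X}_m$ nor the clause set $\mathcal{Y}_{m,n}$.
   Context: Language of linear arithmetic $\{0/0,s/1,p/1,+/2\}$. $\mathcal{T}'$ has axioms (universally closed) $0\neq s(x)$, $p(0)=0$, $p(s(x))=x$, $x+0=x$, $x+s(y)=s(x+y)$, $x\neq0\to x=s(p(x))$, $x+y=y+x$, $(x+y)+z=x+(y+z)$, $x+y=x+z\to y=z$. $m\cdot t$ is $t+(t+\cdots+(t+t)\cdots)$ ($m$ copies), $s^n$ is $n$-fold $s$. $C_m=\forall x,y(m\cdot x=m\cdot y\to x=y)$, $D_{m,n}=\forall x,y\,(s^n(m\cdot x)\neq m\cdot y)$; $\mathcal{X}_m=\mathit{CNF}(\mathit{sk}^\exists(\mathcal{T}'+\neg C_m))$, $\mathcal{Y}_{m,n}=\mathit{CNF}(\mathit{sk}^\exists(\mathcal{T}'+\neg D_{m,n}))$. Skolemization $\mathit{sk}^\exists$/$\mathit{sk}^\forall$ uses canonical Skolem symbols: a strong quantifier $QxA$ with free variables $\vec y$ is replaced by $\mathfrak{s}_{QxA}(\vec y)$, a new function symbol indexed by $QxA$ ($\mathit{sk}^Q$ fixes atoms, commutes with $\wedge,\vee$, $\mathit{sk}^Q(\neg A)=\neg\mathit{sk}^{\overline Q}(A)$, eliminates quantifiers $Q$ and keeps quantifiers $\overline Q$). $\mathit{CNF}$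 gives clause sets of conjunctive normal forms; $\mathcal{E}\vee C=\{E\cup C:E\in\mathcal{E}\}$. Saturation systems: sets of rules $\mathcal{C}/\mathcal{D}$ ($\mathcal{C}$ clause set, $\mathcal{D}$ finite clause set), $+$ = union; a deduction from $\mathcal{C}_0$ is $\mathcal{D}_0=\mathcal{C}_0,\dots,\mathcal{D}_k$ with $\mathcal{D}_{i+1}=\mathcal{D}_i\cup\mathcal{B}_i$ for a rule $\mathcal{D}_i/\mathcal{B}_i$; a refutation has the empty clause in $\mathcal{D}_k$. Sound: any clause $C$ derivable from $\mathcal{C}_0$ has $L(C)\subseteq L(\mathcal{C}_0)$ and $\mathcal{C}_0\models C$; refutationally complete: every inconsistent clause set has a refutation. $\mathrm{Literal}\text{-}\mathrm{AIND}^R_2$: from a clause set containing a clause $\overline{l}(a,a)\vee C$, where $l(x,y)$ is a literal, $a$ is a constant, $l(a,a)$ is ground and $\overline{l}$ denotes the complementary literal, derive $\mathit{CNF}(\neg\,\mathit{sk}^\forall(l(0,a)\wedge\forall x(l(x,a)\to l(s(x),a))))\vee C$, i.e. the clauses $\{\neg l(0,a),l(\sigma,a)\}\cup C$ and $\{\neg l(0,a),\neg l(s(\sigma),a)\}\cup C$ with $\sigma=\mathfrak{s}_{\forall x(l(x,a)\to l(s(x),a))}$. *)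

From Stdlib Require Import List Arith Bool.
Import ListNotations.

Definition var := nat.

Inductive psym : Type := PEq | PSym (name arity : nat).

(* Terms, function symbols and formulas are mutually defined because the
   canonical Skolem symbol  s_{QxA}  is indexed by the formula QxA. *)
Inductive term : Type :=
| Var (x : var)
| App (f : fsym) (args : list term)
with fsym : Type :=
| FZero
| FSucc
| FPred
| FPlus
| FSym (name arity : nat)
| FSk (A : formula)
with formula : Type :=
| Atom (P : psym) (args : list term)
| Neg (A : formula)
| And (A B : formula)
| Or (A B : formula)
| All (x : var) (A : formula)
| Ex (x : var) (A : formula).

Definition Imp (A B : formula) : formula := Or (Neg A) B.

Fixpoint tvars (t : term) : list var :=
  match t with Var x => [x] | App _ ts => flat_map tvars ts end.

Fixpoint fv (A : formula) : list var :=
  match A with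
  | Atom _ ts => flat_map tvars ts
  | Neg B => fv B
  | And B C | Or B C => fv B ++ fv C
  | All x B | Ex x B => remove Nat.eq_dec x (fv B)
  end.

Definition fvs (A : formula) : list var := nodup Nat.eq_dec (fv A).

Definition parity (P : psym) : nat :=
  match P with PEq => 2 | PSym _ k => k end.

Definition arity (f : fsym) : nat :=
  match f with
  | FZero => 0 | FSucc => 1 | FPred => 1 | FPlus => 2
  | FSym _ k => k
  | FSk A => length (fvs A)
  end.

Definition is_quantified (A : formula) : Prop :=
  match A with All _ _ | Ex _ _ => True | _ => False end.

Fixpoint twf (t : term) : Prop :=
  match t with
  | Var _ => True
  | App f ts => fwf f /\ length ts = arity f /\
                fold_right (fun u P => twf u /\ P) True ts
  end
with fwf (f : fsym) : Prop :=
  match f with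
  | FSk A => is_quantified A /\ qwf A
  | _ => True
  end
with qwf (A : formula) : Prop :=
  match A with
  | Atom P ts => length ts = parity P /\ fold_right (fun u P => twf u /\ P) True ts
  | Neg B => qwf B
  | And B C | Or B C => qwf B /\ qwf C
  | All _ B | Ex _ B => qwf B
  end.

Fixpoint tsubst (s : var -> term) (t : term) : term :=
  match t with Var x => s x | App f ts => App f (map (tsubst s) ts) end.

Definition upd (s : var -> term) (x : var) (t : term) : var -> term :=
  fun y => if Nat.eq_dec y x then t else s y.

(* renaming choice for a binder [x] of body [B] under substitution [s]:
   the bound variable is kept unless it would capture a variable of the
   image of a free variable, in which case a fresh variable is used *)
Definition binder_var (s : var -> term) (x : var) (B : formula) : var :=
  let ys := remove Nat.eq_dec x (fv B) in
  let imgs := flat_map (fun y => tvars (s y)) ys in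
  if existsb (fun v => Nat.eqb v x) imgs then S (list_max imgs) else x.

Fixpoint fsubst (s : var -> term) (A : formula) : formula :=
  match A with
  | Atom P ts => Atom P (map (tsubst s) ts)
  | Neg B => Neg (fsubst s B)
  | And B C => And (fsubst s B) (fsubst s C)
  | Or B C => Or (fsubst s B) (fsubst s C)
  | All x B => let z := binder_var s x B in All z (fsubst (upd s x (Var z)) B)
  | Ex x B => let z := binder_var s x B in Ex z (fsubst (upd s x (Var z)) B)
  end.

Definition subst1 (A : formula) (x : var) (t : term) : formula :=
  fsubst (upd Var x t) A.

Inductive quant : Type := QAll | QEx.
Definition dualq (Q : quant) : quant := match Q with QAll => QEx | QEx => QAll end.

Definition skterm (A : formula) : term := App (FSk A) (map Var (fvs A)).

Fixpoint fsize (A : formula) : nat :=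
  match A with
  | Atom _ _ => 1
  | Neg B => S (fsize B)
  | And B C | Or B C => S (fsize B + fsize C)
  | All _ B | Ex _ B => S (fsize B)
  end.

(* fuel-driven definition (substitution preserves size, so the fuel
   [fsize A] always suffices) *)
Fixpoint skf (n : nat) (Q : quant) (A : formula) : formula :=
  match n with
  | 0 => A
  | S n =>
    match A with
    | Atom _ _ => A
    | Neg B => Neg (skf n (dualq Q) B)
    | And B C => And (skf n Q B) (skf n Q C)
    | Or B C => Or (skf n Q B) (skf n Q C)
    | All x B =>
        match Q with
        | QAll => skf n Q (subst1 B x (skterm A))
        | QEx => All x (skf n Q B)
        end
    | Ex x B =>
        match Q with
        | QEx => skf n Q (subst1 B x (skterm A))
        | QAll => Ex x (skf n Q B)
        end
    end
  end.

Definition sk (Q : quant) (A : formula) : formula := skf (fsize A) Q A.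

Record literal : Type := Lit { lsign : bool; lpred : psym; largs : list term }.

(* a clause is a finite set of literals, represented by a list *)
Definition clause := list literal.
Definition clause_set := clause -> Prop.

Definition lcompl (l : literal) : literal := Lit (negb (lsign l)) (lpred l) (largs l).
Definition lsubst (s : var -> term) (l : literal) : literal :=
  Lit (lsign l) (lpred l) (map (tsubst s) (largs l)).
Definition lform (l : literal) : formula :=
  if lsign l then Atom (lpred l) (largs l) else Neg (Atom (lpred l) (largs l)).
Definition lvars (l : literal) : list var := flat_map tvars (largs l).

Definition cprod (L1 L2 : list clause) : list clause :=
  flat_map (fun c => map (fun d => c ++ d) L2) L1.

(* CNF of a universal formula (universal quantifiers are dropped, the
   matrix is put in CNF by negation normal form and distributivity);
   [pos] is the polarity.  Only universal formulas (with positive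
   universal quantifiers) are ever given to it. *)
Fixpoint cnf_pol (pos : bool) (A : formula) : list clause :=
  match A with
  | Atom P ts => [[Lit pos P ts]]
  | Neg B => cnf_pol (negb pos) B
  | And B C => if pos then cnf_pol pos B ++ cnf_pol pos C
               else cprod (cnf_pol pos B) (cnf_pol pos C)
  | Or B C => if pos then cprod (cnf_pol pos B) (cnf_pol pos C)
              else cnf_pol pos B ++ cnf_pol pos C
  | All _ B | Ex _ B => cnf_pol pos B
  end.

Definition CNF (A : formula) : list clause := cnf_pol true A.
Definition CNFs (As : list formula) : list clause := flat_map CNF As.

Definition of_list (cs : list clause) : clause_set := fun c => In c cs.

Definition clauses_or (E : list clause) (C : clause) : list clause :=
  map (fun e => e ++ C) E.

Definition lwf (l : literal) : Prop :=
  length (largs l) = parity (lpred l) /\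
  fold_right (fun u P => twf u /\ P) True (largs l).
Definition cwf (c : clause) : Prop := forall l, In l c -> lwf l.
Definition wf_set (C : clause_set) : Prop := forall c, C c -> cwf c.

Record structure : Type := {
  dom : Type;
  fint : fsym -> list dom -> dom;
  pint : nat -> nat -> list dom -> Prop   (* PSym name arity *)
}.

Fixpoint teval (M : structure) (rho : var -> dom M) (t : term) : dom M :=
  match t with
  | Var x => rho x
  | App f ts => fint M f (map (teval M rho) ts)
  end.

Definition aeval (M : structure) (P : psym) (ds : list (dom M)) : Prop :=
  match P with
  | PEq => match ds with [d1; d2] => d1 = d2 | _ => False end
  | PSym n k => pint M n k ds
  end.

Definition sat_lit (M : structure) (rho : var -> dom M) (l : literal) : Prop :=
  let a := aeval M (lpred l) (map (teval M rho) (largs l)) in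
  if lsign l then a else ~ a.

Definition sat_clause (M : structure) (c : clause) : Prop :=
  forall rho : var -> dom M, exists l, In l c /\ sat_lit M rho l.

Definition models (M : structure) (C : clause_set) : Prop :=
  forall c, C c -> sat_clause M c.

Definition entails (C : clause_set) (c : clause) : Prop :=
  forall M, models M C -> sat_clause M c.

Definition inconsistent (C : clause_set) : Prop := ~ exists M, models M C.

Fixpoint focc (f : fsym) (t : term) : Prop :=
  match t with
  | Var _ => False
  | App g ts => g = f \/ fold_right (fun u P => focc f u \/ P) False ts
  end.

Inductive symb : Type := SF (f : fsym) | SP (n k : nat).

Definition in_lang_clause (sy : symb) (c : clause) : Prop :=
  exists l, In l c /\
    match sy with
    | SF f => exists t, In t (largs l) /\ focc f t
    | SP n k => lpred l = PSym n k
    end.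

Definition in_lang_set (sy : symb) (C : clause_set) : Prop :=
  exists c, C c /\ in_lang_clause sy c.

Definition sat_system := clause_set -> list clause -> Prop.

Definition is_sat_system (S : sat_system) : Prop :=
  forall C D, S C D -> wf_set C /\ wf_set (of_list D).

Definition ssum (S1 S2 : sat_system) : sat_system := fun C D => S1 C D \/ S2 C D.

Definition same_set (C1 C2 : clause_set) : Prop := forall c, C1 c <-> C2 c.

Inductive deduction (S : sat_system) (C0 : clause_set) : clause_set -> Prop :=
| ded_start : deduction S C0 C0
| ded_step (Di Ci : clause_set) (Bi : list clause) :
    deduction S C0 Di -> same_set Di Ci -> S Ci Bi ->
    deduction S C0 (fun c => Di c \/ In c Bi).

Definition derivable (S : sat_system) (C0 : clause_set) (c : clause) : Prop :=
  exists D, deduction S C0 D /\ D c.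

Definition refutes (S : sat_system) (C0 : clause_set) : Prop :=
  exists D, deduction S C0 D /\ D [].

Definition sound (S : sat_system) : Prop :=
  forall C0 c, derivable S C0 c ->
    (forall sy, in_lang_clause sy c -> in_lang_set sy C0) /\ entails C0 c.

Definition refutationally_complete (S : sat_system) : Prop :=
  forall C, wf_set C -> inconsistent C -> refutes S C.

Definition zero : term := App FZero [].
Definition succ (t : term) : term := App FSucc [t].
Definition pred (t : term) : term := App FPred [t].
Definition plus (t u : term) : term := App FPlus [t; u].

Definition linst (l : literal) (x y : var) (u v : term) : literal :=
  lsubst (fun z => if Nat.eq_dec z x then u else if Nat.eq_dec z y then v else Var z) l.

Definition is_constant (a : term) : Prop :=
  exists f, a = App f [] /\ arity f = 0.

Definition aind_clauses (l : literal) (x y : var) (a : term) : list clause :=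
  CNF (Neg (sk QAll
    (And (lform (linst l x y zero a))
         (All x (Imp (lform (linst l x y (Var x) a))
                     (lform (linst l x y (succ (Var x)) a))))))).

Definition literal_aind2 : sat_system := fun C B =>
  exists (l : literal) (x y : var) (a : term) (c D : clause),
    x <> y /\ is_constant a /\ lvars (linst l x y a a) = [] /\
    C D /\ (forall k, In k D <-> k = lcompl (linst l x y a a) \/ In k c) /\
    B = clauses_or (aind_clauses l x y a) c.

Definition eqf (t u : term) : formula := Atom PEq [t; u].
Definition neqf (t u : term) : formula := Neg (eqf t u).

Definition vx : var := 0.
Definition vy : var := 1.
Definition vz : var := 2.
Definition tx := Var vx.
Definition ty := Var vy.
Definition tz := Var vz.

Definition T' : list formula := [
  All vx (neqf zero (succ tx));
  eqf (pred zero) zero;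
  All vx (eqf (pred (succ tx)) tx);
  All vx (eqf (plus tx zero) tx);
  All vx (All vy (eqf (plus tx (succ ty)) (succ (plus tx ty))));
  All vx (Imp (neqf tx zero) (eqf tx (succ (pred tx))));
  All vx (All vy (eqf (plus tx ty) (plus ty tx)));
  All vx (All vy (All vz (eqf (plus (plus tx ty) tz) (plus tx (plus ty tz)))));
  All vx (All vy (All vz (Imp (eqf (plus tx ty) (plus tx tz)) (eqf ty tz))))
].

(* m . t = t + (t + ... + (t + t)...)  (m copies; only used for m >= 1) *)
Fixpoint mult (m : nat) (t : term) : term :=
  match m with
  | 0 => zero
  | S 0 => t
  | S m' => plus t (mult m' t)
  end.

Fixpoint succn (n : nat) (t : term) : term :=
  match n with 0 => t | S n' => succ (succn n' t) end.

Definition C_ (m : nat) : formula :=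
  All vx (All vy (Imp (eqf (mult m tx) (mult m ty)) (eqf tx ty))).

Definition D_ (m n : nat) : formula :=
  All vx (All vy (neqf (succn n (mult m tx)) (mult m ty))).

Definition X_ (m : nat) : clause_set :=
  of_list (CNFs (map (sk QEx) (T' ++ [Neg (C_ m)]))).

Definition Y_ (m n : nat) : clause_set :=
  of_list (CNFs (map (sk QEx) (T' ++ [Neg (D_ m n)]))).

(* A sound saturation system only derives clauses that are true in every model
   of its premises.  So it suffices to exhibit one structure in which X_m
   (resp. Y_{m,n}) is true and in which every Literal-AIND inference preserves
   truth: then the empty clause is never derived.

   The structure is a nonstandard model of T'.  Inside the group
   Z x Z/m x Z take the standard numbers q = (m q, 0, 0) together with all
   (k, r, j) with j > 0; addition is inherited, s adds (m, 0, 0) and p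
   subtracts it (except at 0).  Multiplication by m is not injective,
   m (0,1,1) = m (0,0,1), and s^n (m (0,0,1)) = m (n,0,1); hence ~C_m and
   ~D_{m,n} become true once the Skolem constant of a formula AxB is
   interpreted by a counterexample to B whenever there is one.

   A term in one variable x denotes a map that is affine, d |-> a d + c, on
   all nonstandard and all sufficiently large standard elements.  Comparing
   two such maps shows that for every literal l(x), if l(0) holds and l(e)
   fails for some e, then l(d) holds and l(s d) fails for some d.  The Skolem
   constant of the induction step Ax (l(x,a) -> l(s x,a)) is such a d, which
   makes the clauses added by Literal-AIND true. *)

From Stdlib Require Import List ZArith Lia Classical ClassicalEpsilon.
From Stdlib Require Import FunctionalExtensionality PropExtensionality ProofIrrelevance.
Import ListNotations.

Fixpoint term_ind_nested (P : term -> Prop) (HV : forall x, P (Var x))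
  (HA : forall f ts, Forall P ts -> P (App f ts)) (t : term) : P t :=
  match t with
  | Var x => HV x
  | App f ts =>
      HA f ts ((fix go (l : list term) : Forall P l :=
                  match l with
                  | [] => Forall_nil P
                  | u :: l' => Forall_cons u (term_ind_nested P HV HA u) (go l')
                  end) ts)
  end.

Definition envupd {T : Type} (rho : var -> T) (x : var) (d : T) : var -> T :=
  fun v => if Nat.eq_dec v x then d else rho v.

Lemma envupd_eq {T : Type} (rho : var -> T) x d : envupd rho x d x = d.
Proof. unfold envupd. destruct (Nat.eq_dec x x); congruence. Qed.

Lemma envupd_id {T : Type} (rho : var -> T) x : envupd rho x (rho x) = rho.
Proof.
  apply functional_extensionality. intros v. unfold envupd.
  destruct (Nat.eq_dec v x); congruence.
Qed.

Fixpoint feval (M : structure) (rho : var -> dom M) (A : formula) : Prop :=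
  match A with
  | Atom P ts => aeval M P (map (teval M rho) ts)
  | Neg B => ~ feval M rho B
  | And B C => feval M rho B /\ feval M rho C
  | Or B C => feval M rho B \/ feval M rho C
  | All x B => forall d, feval M (envupd rho x d) B
  | Ex x B => exists d, feval M (envupd rho x d) B
  end.

Lemma teval_subst M rho s t :
  teval M rho (tsubst s t) = teval M (fun v => teval M rho (s v)) t.
Proof.
  induction t as [x|f ts IH] using term_ind_nested; [reflexivity|]. simpl. f_equal.
  rewrite map_map. apply map_ext_in. intros u Hu. rewrite Forall_forall in IH. auto.
Qed.

Lemma teval_ext M rho1 rho2 t :
  (forall v, In v (tvars t) -> rho1 v = rho2 v) -> teval M rho1 t = teval M rho2 t.
Proof.
  induction t as [x|f ts IH] using term_ind_nested; intros H; simpl.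
  - apply H. left; reflexivity.
  - f_equal. apply map_ext_in. intros u Hu. rewrite Forall_forall in IH. apply IH; auto.
    intros v Hv. apply H. apply in_flat_map. eauto.
Qed.

Lemma tvars_tsubst_keep s t v : In v (tvars t) -> s v = Var v -> In v (tvars (tsubst s t)).
Proof.
  induction t as [w|f ts IH] using term_ind_nested; simpl; intros H E.
  - destruct H as [<-|[]]. rewrite E. left. reflexivity.
  - apply in_flat_map in H. destruct H as [u [Hu Hv]]. apply in_flat_map. exists (tsubst s u).
    split; [apply in_map; auto|]. rewrite Forall_forall in IH. apply IH; auto.
Qed.

Lemma sat_lit_subst M rho s l :
  sat_lit M rho (lsubst s l) <-> sat_lit M (fun v => teval M rho (s v)) l.
Proof.
  unfold sat_lit, lsubst. simpl. rewrite map_map.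
  erewrite map_ext by (intros; apply teval_subst). reflexivity.
Qed.

Lemma sat_lit_ext M rho1 rho2 l :
  (forall v, In v (lvars l) -> rho1 v = rho2 v) -> sat_lit M rho1 l <-> sat_lit M rho2 l.
Proof.
  intros H. unfold sat_lit.
  erewrite map_ext_in; [reflexivity|].
  intros t Ht. apply teval_ext. intros v Hv. apply H. apply in_flat_map. eauto.
Qed.

Lemma sat_lcompl M rho l : sat_lit M rho (lcompl l) <-> ~ sat_lit M rho l.
Proof. destruct l as [[] P ts]; unfold sat_lit, lcompl; simpl; split; auto; apply NNPP. Qed.

Lemma feval_lform M rho l : feval M rho (lform l) <-> sat_lit M rho l.
Proof. destruct l as [[] P ts]; unfold sat_lit, lform; simpl; tauto. Qed.

Definition preserves_truth (R : sat_system) (M : structure) : Prop :=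
  forall C B, R C B -> models M C -> forall c, In c B -> sat_clause M c.

Lemma sound_preserves_truth S M : sound S -> preserves_truth S M.
Proof.
  intros HS C B HR HC c Hc.
  assert (Hder : derivable S C c).
  { exists (fun c => C c \/ In c B). split; [|right; exact Hc].
    apply (ded_step S C C C B (ded_start S C)); [intro; tauto|exact HR]. }
  apply (proj2 (HS C c Hder)). exact HC.
Qed.

Lemma ssum_preserves_truth R1 R2 M :
  preserves_truth R1 M -> preserves_truth R2 M -> preserves_truth (ssum R1 R2) M.
Proof. intros H1 H2 C B [HR|HR]; [apply H1|apply H2]; exact HR. Qed.

Lemma model_not_refuted R M C0 (d0 : dom M) :
  preserves_truth R M -> models M C0 -> ~ refutes R C0.
Proof.
  intros HR HC0 [Dk [Hded Hempty]].
  assert (HD : models M Dk).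
  { clear Hempty. induction Hded as [|Di Ci Bi Hded IH Hsame Hrule]; [exact HC0|].
    intros c [Hc|Hc]; [apply IH, Hc|].
    apply (HR Ci Bi Hrule); [|exact Hc]. intros c' Hc'. apply IH, Hsame, Hc'. }
  destruct (HD [] Hempty (fun _ => d0)) as [l [[] _]].
Qed.

Fixpoint universal (pos : bool) (A : formula) : Prop :=
  match A with
  | Atom _ _ => True
  | Neg B => universal (negb pos) B
  | And B C | Or B C => universal pos B /\ universal pos C
  | All _ B => pos = true /\ universal pos B
  | Ex _ B => pos = false /\ universal pos B
  end.

Lemma in_cprod c L1 L2 :
  In c (cprod L1 L2) -> exists c1 c2, In c1 L1 /\ In c2 L2 /\ c = c1 ++ c2.
Proof.
  unfold cprod. rewrite in_flat_map. intros [c1 [H1 H2]].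
  apply in_map_iff in H2. destruct H2 as [c2 [<- H2]]. eauto.
Qed.

Lemma exists_sat_app M rho c1 c2 :
  (exists l, In l c1 /\ sat_lit M rho l) \/ (exists l, In l c2 /\ sat_lit M rho l) ->
  exists l, In l (c1 ++ c2) /\ sat_lit M rho l.
Proof. intros [[l [Hl Hs]]|[l [Hl Hs]]]; exists l; rewrite in_app_iff; auto. Qed.

Lemma cnf_pol_sound M A : forall pos rho, universal pos A ->
  (if pos then feval M rho A else ~ feval M rho A) ->
  forall c, In c (cnf_pol pos A) -> exists l, In l c /\ sat_lit M rho l.
Proof.
  induction A as [P ts|B IH|B IHB C IHC|B IHB C IHC|x B IH|x B IH];
    intros pos rho HU HA c Hc; simpl in *.
  - destruct Hc as [<-|[]]. exists (Lit pos P ts). split; [left; reflexivity|].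
    destruct pos; exact HA.
  - apply (IH (negb pos) rho); auto. destruct pos; simpl; tauto.
  - destruct HU as [HUB HUC]. destruct pos.
    + apply in_app_or in Hc. destruct HA, Hc; [apply (IHB true rho)|apply (IHC true rho)]; auto.
    + apply in_cprod in Hc. destruct Hc as [c1 [c2 [H1 [H2 ->]]]].
      apply exists_sat_app. apply not_and_or in HA.
      destruct HA; [left; apply (IHB false rho)|right; apply (IHC false rho)]; auto.
  - destruct HU as [HUB HUC]. destruct pos.
    + apply in_cprod in Hc. destruct Hc as [c1 [c2 [H1 [H2 ->]]]].
      apply exists_sat_app.
      destruct HA; [left; apply (IHB true rho)|right; apply (IHC true rho)]; auto.
    + apply in_app_or in Hc. apply not_or_and in HA.
      destruct HA, Hc; [apply (IHB false rho)|apply (IHC false rho)]; auto.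
  - destruct HU as [-> HU]. apply (IH true rho); auto.
    rewrite <- (envupd_id rho x). apply HA.
  - destruct HU as [-> HU]. apply (IH false rho); auto.
    intros HB. apply HA. exists (rho x). rewrite envupd_id. exact HB.
Qed.

Definition true_universal (M : structure) (A : formula) : Prop :=
  universal true A /\ forall rho, feval M rho A.

Lemma models_CNFs M As : (forall A, In A As -> true_universal M A) -> models M (of_list (CNFs As)).
Proof.
  intros H c Hc rho. unfold of_list, CNFs in Hc. apply in_flat_map in Hc.
  destruct Hc as [A [HA Hc]]. destruct (H A HA) as [HU HM].
  exact (cnf_pol_sound M A true rho HU (HM rho) c Hc).
Qed.

Fixpoint qfree (A : formula) : Prop :=
  match A with
  | Atom _ _ => True
  | Neg B => qfree B
  | And B C | Or B C => qfree B /\ qfree C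
  | All _ _ | Ex _ _ => False
  end.

Lemma qfree_universal A pos : qfree A -> universal pos A.
Proof.
  revert pos. induction A as [|B IH|B IHB C IHC|B IHB C IHC| |]; cbn; intros pos H;
    try contradiction.
  - exact I.
  - apply IH, H.
  - split; [apply IHB|apply IHC]; tauto.
  - split; [apply IHB|apply IHC]; tauto.
Qed.

Lemma qfree_fsubst s A : qfree A -> qfree (fsubst s A).
Proof. induction A; cbn; tauto. Qed.

Lemma skf_qfree n Q A : qfree A -> skf n Q A = A.
Proof.
  revert Q A. induction n as [|n IH]; intros Q A HA; [reflexivity|].
  destruct A; cbn in *; try contradiction; f_equal; try apply IH; tauto.
Qed.

Lemma feval_fsubst_qfree M rho s A : qfree A ->
  feval M rho (fsubst s A) <-> feval M (fun v => teval M rho (s v)) A.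
Proof.
  induction A as [P ts|B IH|B IHB C IHC|B IHB C IHC| |]; cbn; intros HA; try contradiction.
  - rewrite map_map. erewrite map_ext by (intros; apply teval_subst). reflexivity.
  - rewrite IH by exact HA. reflexivity.
  - rewrite IHB, IHC by tauto. reflexivity.
  - rewrite IHB, IHC by tauto. reflexivity.
Qed.

Lemma feval_ext_qfree M rho1 rho2 A : qfree A ->
  (forall v, In v (fv A) -> rho1 v = rho2 v) -> feval M rho1 A <-> feval M rho2 A.
Proof.
  induction A as [P ts|B IH|B IHB C IHC|B IHB C IHC| |]; cbn; intros HA Hv; try contradiction.
  - erewrite map_ext_in; [reflexivity|]. intros t Ht. apply teval_ext.
    intros v Hvt. apply Hv, in_flat_map. eauto.
  - rewrite IH by auto. reflexivity.
  - rewrite IHB, IHC by (tauto || (intros; apply Hv, in_or_app; auto)). reflexivity.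
  - rewrite IHB, IHC by (tauto || (intros; apply Hv, in_or_app; auto)). reflexivity.
Qed.

Lemma sk_neg_forall2 x y B : x <> y -> qfree B ->
  exists z s, s x = skterm (All x (All y B)) /\ s y = Var z /\
    sk QEx (Neg (All x (All y B))) = Neg (subst1 (fsubst s B) z (skterm (All z (fsubst s B)))).
Proof.
  intros Hxy HB.
  set (z := binder_var (upd Var x (skterm (All x (All y B)))) y B).
  exists z, (upd (upd Var x (skterm (All x (All y B)))) y (Var z)). split; [|split].
  - unfold upd. destruct (Nat.eq_dec x y); [contradiction|].
    destruct (Nat.eq_dec x x); [reflexivity|contradiction].
  - unfold upd. destruct (Nat.eq_dec y y); [reflexivity|contradiction].
  - unfold sk. cbn [fsize skf dualq subst1 fsubst].
    rewrite skf_qfree; [reflexivity|]. apply qfree_fsubst, qfree_fsubst, HB.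
Qed.

Lemma sk_T' : map (sk QEx) T' = T'.
Proof. reflexivity. Qed.

Lemma tvars_mult k t v : In v (tvars (mult k t)) -> In v (tvars t).
Proof.
  induction k as [|[|k] IH]; cbn; intros H; [contradiction|exact H|].
  rewrite app_nil_r, in_app_iff in H. destruct H; auto.
Qed.

Lemma tvars_succn n t v : In v (tvars (succn n t)) -> In v (tvars t).
Proof. induction n as [|n IH]; cbn; [auto|]. rewrite app_nil_r. exact IH. Qed.

Definition aind_step (l : literal) (x y : var) (a : term) : formula :=
  All x (Imp (lform (linst l x y (Var x) a)) (lform (linst l x y (succ (Var x)) a))).

Lemma aind_clauses_eq l x y a :
  aind_clauses l x y a =
    [[lcompl (linst l x y zero a);
      lsubst (upd Var x (skterm (aind_step l x y a))) (linst l x y (Var x) a)];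
     [lcompl (linst l x y zero a);
      lcompl (lsubst (upd Var x (skterm (aind_step l x y a))) (linst l x y (succ (Var x)) a))]].
Proof. destruct l as [[] P ts]; reflexivity. Qed.

Lemma linst_closed_vars l x y a :
  lvars (linst l x y a a) = [] -> forall v, In v (lvars l) -> v = x \/ v = y.
Proof.
  intros Hnil v Hv. apply NNPP. intros Hxy.
  assert (Hin : In v (lvars (linst l x y a a))).
  { unfold lvars in *. cbn. apply in_flat_map in Hv. destruct Hv as [t [Ht Hvt]].
    apply in_flat_map. eexists. split; [apply in_map, Ht|].
    apply tvars_tsubst_keep; [exact Hvt|].
    destruct (Nat.eq_dec v x); [tauto|]. destruct (Nat.eq_dec v y); [tauto|reflexivity]. }
  rewrite Hnil in Hin. exact Hin.
Qed.

(* Sizes that count the formulas indexing Skolem symbols: if s_A occurs in B, then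
   formula_size A < formula_size B. *)
Fixpoint term_size (t : term) : nat :=
  match t with
  | Var _ => 1
  | App f ts => S (fsym_size f + list_sum (map term_size ts))
  end
with fsym_size (f : fsym) : nat :=
  match f with FSk A => S (formula_size A) | _ => 0 end
with formula_size (A : formula) : nat :=
  match A with
  | Atom _ ts => S (list_sum (map term_size ts))
  | Neg B | All _ B | Ex _ B => S (formula_size B)
  | And B C | Or B C => S (formula_size B + formula_size C)
  end.

Lemma in_list_sum_le (u : term) ts : In u ts -> term_size u <= list_sum (map term_size ts).
Proof.
  induction ts as [|v ts IH]; simpl; intros H; [contradiction|].
  destruct H as [->|H]; [lia|]. specialize (IH H). lia.
Qed.

(** * The nonstandard model *)

Record G : Type := mkG { gk : Z; gr : Z; gj : Z }.

Definition G_eq_dec (u v : G) : {u = v} + {u <> v}.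
Proof. decide equality; apply Z.eq_dec. Defined.

Lemma G_ext u v : gk u = gk v -> gr u = gr v -> gj u = gj v -> u = v.
Proof. destruct u, v; simpl; intros; subst; reflexivity. Qed.

Section Model.

Local Open Scope Z_scope.

Variable m : nat.
Hypothesis m_pos : (0 < m)%nat.
Local Notation mz := (Z.of_nat m).

Definition g0 : G := mkG 0 0 0.
Definition gadd (u v : G) : G := mkG (gk u + gk v) ((gr u + gr v) mod mz) (gj u + gj v).
Definition gscale (a : nat) (v : G) : G :=
  mkG (Z.of_nat a * gk v) ((Z.of_nat a * gr v) mod mz) (Z.of_nat a * gj v).
Definition gshift (c : Z) (v : G) : G := mkG (gk v + c * mz) (gr v) (gj v).
Definition gpred (v : G) : G := if G_eq_dec v g0 then v else gshift (-1) v.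
Definition gstd (q : nat) : G := mkG (Z.of_nat q * mz) 0 0.

Ltac gsimpl := cbn [gadd gscale gshift gpred gstd g0 gk gr gj proj1_sig] in *.

Definition valid (v : G) : Prop :=
  (exists q, v = gstd q) \/ (0 < gj v /\ 0 <= gr v < mz).

Lemma mz_pos : 0 < mz.
Proof. lia. Qed.

Lemma mod_range a : 0 <= a mod mz < mz.
Proof. apply Z.mod_pos_bound, mz_pos. Qed.

Lemma valid_range v : valid v -> 0 <= gr v < mz /\ 0 <= gj v.
Proof. intros [[q ->]|H]; simpl; lia. Qed.

Lemma gadd_comm u v : gadd u v = gadd v u.
Proof. apply G_ext; gsimpl; [lia| f_equal; lia | lia]. Qed.

Lemma gadd_assoc u v w : gadd (gadd u v) w = gadd u (gadd v w).
Proof.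
  apply G_ext; gsimpl; try lia.
  rewrite Zplus_mod_idemp_l, Zplus_mod_idemp_r. f_equal. lia.
Qed.

Lemma gadd_g0_l v : 0 <= gr v < mz -> gadd g0 v = v.
Proof. intros H. apply G_ext; gsimpl; [lia| apply Z.mod_small; lia | lia]. Qed.

Lemma gadd_cancel_l u v w : 0 <= gr v < mz -> 0 <= gr w < mz ->
  gadd u v = gadd u w -> v = w.
Proof.
  intros Hv Hw E.
  assert (Er : gr (gadd u v) = gr (gadd u w)) by (rewrite E; reflexivity).
  apply (f_equal gk) in E as Ek. apply (f_equal gj) in E as Ej.
  gsimpl. apply G_ext; try lia.
  rewrite <- (Z.mod_small (gr v) mz), <- (Z.mod_small (gr w) mz) by lia.
  replace (gr v) with ((gr u + gr v) + - gr u) by lia.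
  replace (gr w) with ((gr u + gr w) + - gr u) by lia.
  rewrite Zplus_mod, Er, <- Zplus_mod. reflexivity.
Qed.

Lemma gadd_gshift_r c u v : gadd u (gshift c v) = gshift c (gadd u v).
Proof. apply G_ext; gsimpl; lia. Qed.

Lemma gscale_add a b v : gscale (a + b) v = gadd (gscale a v) (gscale b v).
Proof.
  apply G_ext; gsimpl; try lia.
  rewrite <- Zplus_mod. f_equal. lia.
Qed.

Lemma gscale_0 v : gscale 0 v = g0.
Proof. apply G_ext; reflexivity. Qed.

Lemma gscale_1 v : 0 <= gr v < mz -> gscale 1 v = v.
Proof. intros H. apply G_ext; gsimpl; [lia| rewrite Z.mul_1_l; apply Z.mod_small; lia | lia]. Qed.

Lemma gscale_S a v : gscale (S a) v = gadd v (gscale a v).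
Proof.
  apply G_ext; gsimpl; try lia.
  rewrite Zplus_mod_idemp_r. f_equal. lia.
Qed.

Lemma gk_affine a v c : gk (gadd (gscale a v) c) = Z.of_nat a * gk v + gk c.
Proof. reflexivity. Qed.

Lemma valid_g0 : valid g0.
Proof. left. exists 0%nat. apply G_ext; gsimpl; lia. Qed.

Lemma valid_gshift_1 v : valid v -> valid (gshift 1 v).
Proof.
  intros [[q ->]|H]; [left; exists (S q)|right; gsimpl; lia].
  apply G_ext; gsimpl; lia.
Qed.

Lemma valid_gpred v : valid v -> valid (gpred v).
Proof.
  intros Hv. unfold gpred. destruct (G_eq_dec v g0) as [E|E]; [exact Hv|].
  destruct Hv as [[[|q] ->]|H].
  - exfalso. apply E. apply G_ext; gsimpl; lia.
  - left. exists q. apply G_ext; gsimpl; lia.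
  - right. gsimpl. lia.
Qed.

Lemma valid_gadd u v : valid u -> valid v -> valid (gadd u v).
Proof.
  intros Hu Hv.
  destruct Hu as [[q1 ->]|Hu]; [destruct Hv as [[q2 ->]|Hv]|].
  - left. exists (q1 + q2)%nat. apply G_ext; gsimpl; [lia| |lia]. apply Z.mod_0_l. lia.
  - right. gsimpl. split; [lia|apply mod_range].
  - right. pose proof (valid_range v Hv). gsimpl. split; [lia|apply mod_range].
Qed.

Definition D : Type := {v : G | valid v}.
Definition val (d : D) : G := proj1_sig d.

Lemma val_inj (d e : D) : val d = val e -> d = e.
Proof. intros E. apply eq_sig_hprop; [intros; apply proof_irrelevance|exact E]. Qed.

Lemma val_range d : 0 <= gr (val d) < mz /\ 0 <= gj (val d).
Proof. exact (valid_range _ (proj2_sig d)). Qed.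

Definition dzero : D := exist valid g0 valid_g0.
Definition dsucc (d : D) : D := exist valid (gshift 1 (val d)) (valid_gshift_1 _ (proj2_sig d)).
Definition dpred (d : D) : D := exist valid (gpred (val d)) (valid_gpred _ (proj2_sig d)).
Definition dadd (d e : D) : D :=
  exist valid (gadd (val d) (val e)) (valid_gadd _ _ (proj2_sig d) (proj2_sig e)).
Definition dstd (n : nat) : D := exist valid (gstd n) (or_introl (ex_intro _ n eq_refl)).
Definition dnst (k r j : Z) (Hj : 0 < j) (Hr : 0 <= r < mz) : D :=
  exist valid (mkG k r j) (or_intror (conj Hj Hr)).

Ltac dsimpl := cbn [val dzero dsucc dpred dadd dstd dnst proj1_sig] in *; gsimpl.

Lemma val_dpred d : d <> dzero -> val (dpred d) = gshift (-1) (val d).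
Proof.
  intros Hd. dsimpl. unfold gpred. destruct (G_eq_dec _ g0) as [E|E]; [|reflexivity].
  exfalso. apply Hd, val_inj, E.
Qed.

Lemma dzero_neq_dsucc d : dzero <> dsucc d.
Proof.
  intros E. apply (f_equal val) in E.
  destruct d as [v [[q ->]|Hv]]; dsimpl;
    [apply (f_equal gk) in E | apply (f_equal gj) in E]; gsimpl; lia.
Qed.

Lemma dpred_dzero : dpred dzero = dzero.
Proof. apply val_inj. dsimpl. unfold gpred. destruct (G_eq_dec g0 g0); congruence. Qed.

Lemma dpred_dsucc d : dpred (dsucc d) = d.
Proof.
  apply val_inj. rewrite val_dpred by apply not_eq_sym, dzero_neq_dsucc.
  apply G_ext; dsimpl; lia.
Qed.

Lemma dadd_dzero d : dadd d dzero = d.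
Proof. apply val_inj. dsimpl. rewrite gadd_comm. apply gadd_g0_l, val_range. Qed.

Lemma dadd_dsucc d e : dadd d (dsucc e) = dsucc (dadd d e).
Proof. apply val_inj, gadd_gshift_r. Qed.

Lemma dsucc_dpred d : d <> dzero -> dsucc (dpred d) = d.
Proof.
  intros Hd. apply val_inj. change (val (dsucc (dpred d))) with (gshift 1 (val (dpred d))).
  rewrite val_dpred by exact Hd. apply G_ext; gsimpl; lia.
Qed.

Lemma dadd_comm d e : dadd d e = dadd e d.
Proof. apply val_inj, gadd_comm. Qed.

Lemma dadd_assoc d e f : dadd (dadd d e) f = dadd d (dadd e f).
Proof. apply val_inj, gadd_assoc. Qed.

Lemma dadd_cancel_l d e f : dadd d e = dadd d f -> e = f.
Proof.
  intros E. apply val_inj. apply (f_equal val) in E.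
  apply (gadd_cancel_l (val d)); try apply val_range; exact E.
Qed.

Lemma dstd_0 : dstd 0 = dzero.
Proof. apply val_inj, G_ext; reflexivity. Qed.

Lemma dsucc_dstd n : dsucc (dstd n) = dstd (S n).
Proof. apply val_inj, G_ext; dsimpl; lia. Qed.

Lemma D_cases d : (exists n, d = dstd n) \/ 0 < gj (val d).
Proof.
  destruct d as [v [[n ->]|Hv]]; [left; exists n; apply val_inj; reflexivity|right; apply Hv].
Qed.

(** * Induction for literals in the model *)

Lemma standard_counterexample_step (P : D -> Prop) n :
  P dzero -> ~ P (dstd n) -> exists d, P d /\ ~ P (dsucc d).
Proof.
  rewrite <- dstd_0. induction n as [|n IH]; intros H0 Hn; [contradiction|].
  destruct (classic (P (dstd n))) as [Hp|Hp]; [|apply IH; auto].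
  exists (dstd n). rewrite dsucc_dstd. auto.
Qed.

Definition large (N : Z) (d : D) : Prop := 0 < gj (val d) \/ N <= gk (val d).

Lemma large_dstd N n : (Z.to_nat N <= n)%nat -> large N (dstd n).
Proof. intros Hn. right. dsimpl. nia. Qed.

Definition eventually_affine (f : D -> D) : Prop :=
  exists (a : nat) (c : G) (N : Z), 0 <= gr c < mz /\ 0 <= gj c /\
    forall d, large N d -> val (f d) = gadd (gscale a (val d)) c.

Lemma eventually_affine_const e : eventually_affine (fun _ => e).
Proof.
  exists 0%nat, (val e), 0. pose proof (val_range e).
  split; [tauto|]. split; [tauto|].
  intros d _. rewrite gscale_0, gadd_g0_l; tauto.
Qed.

Lemma eventually_affine_id : eventually_affine (fun d => d).
Proof.
  exists 1%nat, g0, 0. split; [gsimpl; lia|]. split; [gsimpl; lia|].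
  intros d _. rewrite gscale_1, gadd_comm, gadd_g0_l; try apply val_range; reflexivity.
Qed.

Lemma eventually_affine_succ f : eventually_affine f -> eventually_affine (fun d => dsucc (f d)).
Proof.
  intros (a & c & N & Hc & Hj & Hf). exists a, (gshift 1 c), N.
  split; [exact Hc|]. split; [gsimpl; lia|].
  intros d Hd. rewrite gadd_gshift_r, <- Hf by exact Hd. reflexivity.
Qed.

Lemma eventually_affine_add f h :
  eventually_affine f -> eventually_affine h -> eventually_affine (fun d => dadd (f d) (h d)).
Proof.
  intros (a & c & N1 & Hc & Hjc & Hf) (b & e & N2 & He & Hje & Hh).
  exists (a + b)%nat, (gadd c e), (Z.max N1 N2).
  split; [apply mod_range|]. split; [gsimpl; lia|].
  intros d Hd. change (val (dadd (f d) (h d))) with (gadd (val (f d)) (val (h d))).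
  rewrite Hf, Hh by (unfold large in *; lia).
  rewrite gscale_add, !gadd_assoc. f_equal.
  rewrite <- !gadd_assoc. f_equal. apply gadd_comm.
Qed.

Lemma eventually_affine_pred f : eventually_affine f -> eventually_affine (fun d => dpred (f d)).
Proof.
  intros (a & c & N & Hc & Hj & Hf). destruct a as [|a].
  - exists 0%nat, (gpred c), N.
    assert (Hpc : 0 <= gr (gpred c) < mz /\ 0 <= gj (gpred c))
      by (unfold gpred; destruct (G_eq_dec c g0); gsimpl; lia).
    split; [tauto|]. split; [tauto|].
    intros d Hd. change (val (dpred (f d))) with (gpred (val (f d))).
    rewrite Hf, !gscale_0, !gadd_g0_l by tauto. reflexivity.
  - (* The bound makes a d + c nonzero on large d, so that p acts there as a shift. *)
    exists (S a), (gshift (-1) c), (Z.max N (Z.max 1 (1 - gk c))).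
    split; [exact Hc|]. split; [gsimpl; lia|].
    intros d Hd. change (val (dpred (f d))) with (gpred (val (f d))).
    rewrite Hf by (unfold large in *; lia).
    unfold gpred. destruct (G_eq_dec _ g0) as [E|E].
    + exfalso. apply (f_equal gk) in E as Ek. apply (f_equal gj) in E as Ej.
      unfold large in Hd. gsimpl. nia.
    + symmetry. apply gadd_gshift_r.
Qed.

Lemma slope_unique (a b : nat) k1 k2 c e : k1 <> k2 ->
  Z.of_nat a * k1 + c = Z.of_nat b * k1 + e ->
  Z.of_nat a * k2 + c = Z.of_nat b * k2 + e -> a = b.
Proof. intros Hk E1 E2. apply Nat2Z.inj. nia. Qed.

Lemma eventually_affine_eq_nonstandard f h d :
  eventually_affine f -> eventually_affine h -> (forall n, f (dstd n) = h (dstd n)) ->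
  0 < gj (val d) -> f d = h d.
Proof.
  intros (a & c & N1 & Hc & _ & Hf) (b & e & N2 & He & _ & Hh) Hstd Hd.
  set (n0 := Z.to_nat (Z.max N1 N2)).
  assert (Hn : forall n, (n0 <= n)%nat ->
            gadd (gscale a (val (dstd n))) c = gadd (gscale b (val (dstd n))) e).
  { intros n Hn. rewrite <- Hf, <- Hh by (apply large_dstd; lia). f_equal. apply Hstd. }
  assert (E0 := Hn n0 (le_n _)). assert (E1 := Hn (S n0) (Nat.le_succ_diag_r _)).
  assert (Hab : a = b).
  { apply (f_equal gk) in E0, E1. rewrite !gk_affine in E0, E1.
    eapply slope_unique; [|exact E0|exact E1]. dsimpl. nia. }
  subst b. apply gadd_cancel_l in E0; [subst e|exact Hc|exact He].
  apply val_inj. rewrite Hf, Hh by (left; exact Hd). reflexivity.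
Qed.

Lemma eventually_affine_neq_dpred f h d :
  eventually_affine f -> eventually_affine h -> (forall n, f (dstd n) <> h (dstd n)) ->
  0 < gj (val d) -> f d = h d -> f (dpred d) <> h (dpred d).
Proof.
  intros (a & c & N1 & Hc & _ & Hf) (b & e & N2 & He & _ & Hh) Hstd Hd Ed Ep.
  assert (Hpd : val (dpred d) = gshift (-1) (val d))
    by (apply val_dpred; intros ->; dsimpl; lia).
  assert (Hnst : forall d', 0 < gj (val d') -> f d' = h d' ->
            gadd (gscale a (val d')) c = gadd (gscale b (val d')) e).
  { intros d' Hd' E. rewrite <- Hf, <- Hh by (left; exact Hd'). f_equal. exact E. }
  apply Hnst in Ed; [|exact Hd]. apply Hnst in Ep; [|rewrite Hpd; exact Hd].
  destruct (Nat.eq_dec a b) as [<-|Hab].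
  - apply gadd_cancel_l in Ed; [subst e|exact Hc|exact He].
    apply (Hstd (Z.to_nat (Z.max N1 N2))), val_inj.
    rewrite Hf, Hh by (apply large_dstd; lia). reflexivity.
  - apply Hab. apply (f_equal gk) in Ed, Ep. rewrite !gk_affine, Hpd in *.
    eapply slope_unique; [|exact Ed|exact Ep]. gsimpl. lia.
Qed.

Lemma eventually_affine_induction (f h : D -> D) (P : D -> Prop) a :
  eventually_affine f -> eventually_affine h ->
  (forall d, P d <-> f d = h d) \/ (forall d, P d <-> f d <> h d) ->
  P dzero -> ~ P a -> exists d, P d /\ ~ P (dsucc d).
Proof.
  intros Hf Hh HP H0 Ha.
  destruct (classic (exists n, ~ P (dstd n))) as [[n Hn]|Hstd].
  { exact (standard_counterexample_step P n H0 Hn). }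
  assert (Hstd' : forall n, P (dstd n)) by (intros n; apply NNPP; eauto).
  assert (Ha_nst : 0 < gj (val a)).
  { destruct (D_cases a) as [[n ->]|H]; [contradiction (Ha (Hstd' n))|exact H]. }
  destruct HP as [HP|HP].
  - exfalso. apply Ha, HP, (eventually_affine_eq_nonstandard f h a Hf Hh); [|exact Ha_nst].
    intros n. apply HP, Hstd'.
  - exists (dpred a). rewrite dsucc_dpred by (intros ->; dsimpl; lia). split; [|exact Ha].
    apply HP, (eventually_affine_neq_dpred f h a Hf Hh); [|exact Ha_nst|].
    + intros n. apply HP, Hstd'.
    + apply NNPP. intros N. apply Ha, HP, N.
Qed.

(* Symbols other than 0, s, p, + and the Skolem symbols, as well as ill-formed
   applications, denote 0.  Skolem symbols ignore their arguments: the Skolem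
   terms that matter here are closed. *)
Definition fint_D (g : formula -> D) (f : fsym) (args : list D) : D :=
  match f, args with
  | FSucc, [d] => dsucc d
  | FPred, [d] => dpred d
  | FPlus, [d; e] => dadd d e
  | FSk A, _ => g A
  | _, _ => dzero
  end.

Definition Mg (g : formula -> D) : structure :=
  {| dom := D; fint := fint_D g; pint := fun _ _ _ => False |}.

Lemma teval_eventually_affine g rho x t :
  eventually_affine (fun d => teval (Mg g) (envupd rho x d) t).
Proof.
  induction t as [v|f ts IH] using term_ind_nested.
  - cbn. unfold envupd. destruct (Nat.eq_dec v x).
    + apply eventually_affine_id.
    + apply eventually_affine_const.
  - cbn [teval Mg fint].
    destruct f; cbn [fint_D]; try apply eventually_affine_const;
      destruct ts as [|t1 [|t2 [|t3 ts]]]; cbn [map fint_D]; try apply eventually_affine_const;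
      apply Forall_inv in IH as IH1; apply Forall_inv_tail in IH.
    + apply eventually_affine_succ, IH1.
    + apply eventually_affine_pred, IH1.
    + apply eventually_affine_add; [exact IH1|exact (Forall_inv IH)].
Qed.

Lemma literal_induction g (l : literal) rho x a :
  let phi := fun u => sat_lit (Mg g) (envupd rho x u) l in
  phi dzero -> ~ phi a -> exists d, phi d /\ ~ phi (dsucc d).
Proof.
  intros phi. destruct l as [b [|n k] ts];
    [destruct ts as [|t1 [|t2 [|t3 ts]]]|];
    try (unfold phi, sat_lit; destruct b; cbn; tauto).
  apply (eventually_affine_induction (fun u => teval (Mg g) (envupd rho x u) t1)
           (fun u => teval (Mg g) (envupd rho x u) t2) phi a);
    try apply teval_eventually_affine.
  destruct b; [left|right]; reflexivity.
Qed.

(** * Interpretation of the Skolem symbols *)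

Lemma teval_agree g1 g2 rho t :
  (forall A, (formula_size A < term_size t)%nat -> g1 A = g2 A) ->
  teval (Mg g1) rho t = teval (Mg g2) rho t.
Proof.
  induction t as [v|f ts IH] using term_ind_nested; intros Hg; [reflexivity|].
  cbn [teval Mg fint] in *. rewrite Forall_forall in IH.
  rewrite (map_ext_in (teval (Mg g1) rho) (teval (Mg g2) rho) ts).
  - destruct f; try reflexivity. apply Hg. cbn. lia.
  - intros u Hu. apply IH; [exact Hu|]. intros A HA. apply Hg.
    pose proof (in_list_sum_le u ts Hu). cbn. lia.
Qed.

Lemma feval_agree g1 g2 B :
  (forall A, (formula_size A < formula_size B)%nat -> g1 A = g2 A) ->
  forall rho, feval (Mg g1) rho B <-> feval (Mg g2) rho B.
Proof.
  induction B as [P ts|B IH|B IHB C IHC|B IHB C IHC|x B IH|x B IH];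
    intros Hg rho; cbn [feval formula_size] in *.
  - rewrite (map_ext_in (teval (Mg g1) rho) (teval (Mg g2) rho) ts); [destruct P; reflexivity|].
    intros u Hu. apply teval_agree. intros A HA. apply Hg.
    pose proof (in_list_sum_le u ts Hu). lia.
  - rewrite IH; [reflexivity|]. intros A HA; apply Hg; lia.
  - rewrite IHB, IHC; [reflexivity| |]; intros A HA; apply Hg; lia.
  - rewrite IHB, IHC; [reflexivity| |]; intros A HA; apply Hg; lia.
  - split; intros H d; apply (IH ltac:(intros A HA; apply Hg; lia)), H.
  - split; intros [d H]; exists d; apply (IH ltac:(intros A HA; apply Hg; lia)), H.
Qed.

Definition rho0 : var -> D := fun _ => dzero.

(* The Skolem constant of AxB is a counterexample to B if there is one.  Since
   B may contain Skolem symbols of smaller formulas, the interpretation is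
   built by iteration: skolem_approx k is already correct on formulas of size
   less than k. *)
Definition skolem_step (g : formula -> D) (A : formula) : D :=
  match A with
  | All x B => epsilon (inhabits dzero) (fun d => ~ feval (Mg g) (envupd rho0 x d) B)
  | _ => dzero
  end.

Definition skolem_approx (k : nat) : formula -> D := Nat.iter k skolem_step (fun _ => dzero).

Definition skolem (A : formula) : D := skolem_approx (S (formula_size A)) A.

Definition Msk : structure := Mg skolem.

Lemma skolem_approx_skolem A k : (formula_size A < k)%nat -> skolem_approx k A = skolem A.
Proof.
  revert k. induction A as [A IH] using (induction_ltof1 _ formula_size).
  unfold ltof in IH. intros [|k] Hk; [lia|].
  change (skolem_step (skolem_approx k) A = skolem_step (skolem_approx (formula_size A)) A).
  destruct A as [| | | | x B |]; try reflexivity.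
  cbn [skolem_step]. f_equal.
  apply functional_extensionality. intros d. apply propositional_extensionality.
  cbn [formula_size] in *.
  assert (Hagree : forall g, (forall A, (formula_size A < formula_size B)%nat -> g A = skolem A) ->
            forall rho, feval (Mg g) rho B <-> feval Msk rho B)
    by (intros; apply feval_agree; auto).
  rewrite (Hagree (skolem_approx k)), (Hagree (skolem_approx (S (formula_size B))));
    [reflexivity| |]; intros A HA; apply IH; lia.
Qed.

Lemma skolem_witness x B :
  (exists d, ~ feval Msk (envupd rho0 x d) B) -> ~ feval Msk (envupd rho0 x (skolem (All x B))) B.
Proof.
  assert (Hagree : forall rho, feval Msk rho B <->
                     feval (Mg (skolem_approx (S (formula_size B)))) rho B).
  { apply feval_agree. intros A HA. symmetry. apply skolem_approx_skolem. lia. }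
  intros [d Hd]. rewrite Hagree.
  apply (epsilon_spec (inhabits dzero)
           (fun d => ~ feval (Mg (skolem_approx (S (formula_size B)))) (envupd rho0 x d) B)).
  exists d. rewrite <- Hagree. exact Hd.
Qed.

Lemma teval_constant a r1 r2 : is_constant a -> teval Msk r1 a = teval Msk r2 a.
Proof. intros [f [-> _]]. reflexivity. Qed.

(** * Literal-AIND preserves truth in the model *)

Section LiteralAIND.

Variables (l : literal) (x y : var) (a : term).
Hypothesis a_constant : is_constant a.
Hypothesis l_vars : forall v, In v (lvars l) -> v = x \/ v = y.

Definition lit_at (u : D) : Prop :=
  sat_lit Msk (envupd (envupd rho0 y (teval Msk rho0 a)) x u) l.

Lemma sat_linst r U : sat_lit Msk r (linst l x y U a) <-> lit_at (teval Msk r U).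
Proof.
  unfold linst, lit_at. rewrite sat_lit_subst. apply sat_lit_ext.
  intros v Hv. unfold envupd.
  destruct (Nat.eq_dec v x) as [->|Hvx]; [reflexivity|].
  destruct (l_vars v Hv) as [->| ->]; [contradiction|].
  destruct (Nat.eq_dec y y); [|contradiction].
  apply teval_constant, a_constant.
Qed.

Lemma sat_linst_skolem U rho : (forall v, In v (tvars U) -> v = x) ->
  sat_lit Msk rho (lsubst (upd Var x (skterm (aind_step l x y a))) (linst l x y U a)) <->
  lit_at (teval Msk (envupd rho0 x (skolem (aind_step l x y a))) U).
Proof.
  intros HU. rewrite sat_lit_subst, sat_linst.
  erewrite teval_ext; [reflexivity|].
  intros v Hv. rewrite (HU v Hv), envupd_eq. unfold upd.
  destruct (Nat.eq_dec x x); [reflexivity|contradiction].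
Qed.

Lemma aind_step_witness : lit_at dzero -> ~ lit_at (teval Msk rho0 a) ->
  lit_at (skolem (aind_step l x y a)) /\ ~ lit_at (dsucc (skolem (aind_step l x y a))).
Proof.
  intros H0 Ha. unfold aind_step.
  set (B := Imp (lform (linst l x y (Var x) a)) (lform (linst l x y (succ (Var x)) a))).
  assert (HB : forall d, feval Msk (envupd rho0 x d) B <-> ~ lit_at d \/ lit_at (dsucc d)).
  { intros d. unfold B. cbn [feval Imp]. rewrite !feval_lform, !sat_linst.
    cbn. rewrite envupd_eq. reflexivity. }
  destruct (literal_induction skolem l (envupd rho0 y (teval Msk rho0 a)) x _ H0 Ha)
    as [d [Hd Hsd]].
  assert (Hw : ~ feval Msk (envupd rho0 x (skolem (All x B))) B).
  { apply skolem_witness. exists d. rewrite HB. tauto. }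
  rewrite HB in Hw. split; [apply NNPP|]; tauto.
Qed.

Lemma aind_clauses_true rho : ~ sat_lit Msk rho (linst l x y a a) ->
  forall e, In e (aind_clauses l x y a) -> exists k, In k e /\ sat_lit Msk rho k.
Proof.
  intros Hna e He. rewrite aind_clauses_eq in He.
  rewrite sat_linst, (teval_constant a rho rho0 a_constant) in Hna.
  destruct (classic (lit_at dzero)) as [H0|H0].
  - destruct (aind_step_witness H0 Hna) as [H1 H2].
    destruct He as [<-|[<-|[]]]; eexists; (split; [right; left; reflexivity|]).
    + rewrite sat_linst_skolem by (intros v [<-|[]]; reflexivity).
      cbn. rewrite envupd_eq. exact H1.
    + rewrite sat_lcompl, sat_linst_skolem by (cbn; intros v [<-|[]]; reflexivity).
      cbn. rewrite envupd_eq. exact H2.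
  - exists (lcompl (linst l x y zero a)).
    split; [destruct He as [<-|[<-|[]]]; left; reflexivity|].
    rewrite sat_lcompl, sat_linst. exact H0.
Qed.

End LiteralAIND.

Lemma literal_aind2_preserves_truth : preserves_truth literal_aind2 Msk.
Proof.
  intros C B (l & x & y & a & c & Dc & _ & Ha & Hclosed & HDc & HDl & ->) HC e He rho.
  unfold clauses_or in He. apply in_map_iff in He. destruct He as [e' [<- He']].
  destruct (HC Dc HDc rho) as [k [Hk Hsat]].
  apply HDl in Hk. destruct Hk as [->|Hk].
  - rewrite sat_lcompl in Hsat.
    destruct (aind_clauses_true l x y a Ha (linst_closed_vars l x y a Hclosed) rho Hsat e' He')
      as [k' [Hk' Hs']].
    exists k'. split; [apply in_or_app; left|]; auto.
  - exists k. split; [apply in_or_app; right|]; auto.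
Qed.

(** * X_m and Y_{m,n} are true in the model *)

Lemma sk_neg_forall2_true x y B : x <> y -> qfree B ->
  (forall v, In v (fv B) -> v = x \/ v = y) ->
  (exists d e, ~ feval Msk (envupd (envupd rho0 x d) y e) B) ->
  true_universal Msk (sk QEx (Neg (All x (All y B)))).
Proof.
  intros Hxy HB Hfv [d [e Hde]].
  destruct (sk_neg_forall2 x y B Hxy HB) as (z & s & Hsx & Hsy & ->).
  split; [apply qfree_universal, qfree_fsubst, qfree_fsubst, HB|intros rho].
  assert (Heval : forall r, feval Msk r (fsubst s B) <->
            feval Msk (envupd (envupd rho0 x (skolem (All x (All y B)))) y (r z)) B).
  { intros r. rewrite feval_fsubst_qfree by exact HB. apply feval_ext_qfree; [exact HB|].
    intros v Hv. unfold envupd. destruct (Hfv v Hv) as [->| ->].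
    - rewrite Hsx. destruct (Nat.eq_dec x y); [contradiction|].
      destruct (Nat.eq_dec x x); [reflexivity|contradiction].
    - rewrite Hsy. destruct (Nat.eq_dec y y); [reflexivity|contradiction]. }
  assert (Hx : exists e', ~ feval Msk (envupd (envupd rho0 x (skolem (All x (All y B)))) y e') B).
  { apply not_all_ex_not. apply (skolem_witness x (All y B)).
    exists d. intros Hd. apply Hde, Hd. }
  assert (Hy : ~ feval Msk (envupd rho0 z (skolem (All z (fsubst s B)))) (fsubst s B)).
  { apply skolem_witness. destruct Hx as [e' He']. exists e'.
    rewrite Heval, envupd_eq. exact He'. }
  cbn [feval]. unfold subst1.
  rewrite feval_fsubst_qfree, Heval by (apply qfree_fsubst, HB).
  rewrite Heval, envupd_eq in Hy. cbn. unfold upd.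
  destruct (Nat.eq_dec z z); [exact Hy|contradiction].
Qed.

Lemma T'_true A : In A T' -> true_universal Msk A.
Proof.
  intros HA. split.
  - repeat (destruct HA as [<-|HA]; [cbn; tauto|]). destruct HA.
  - intros rho. repeat (destruct HA as [<-|HA]); [..|destruct HA]; cbn; intros.
    + apply dzero_neq_dsucc.
    + apply dpred_dzero.
    + apply dpred_dsucc.
    + apply dadd_dzero.
    + apply dadd_dsucc.
    + destruct (classic (d = dzero)) as [Hd|Hd]; [left; tauto|right].
      symmetry. apply dsucc_dpred, Hd.
    + apply dadd_comm.
    + apply dadd_assoc.
    + destruct (classic (dadd d d0 = dadd d d1)) as [E|E]; [right|left; exact E].
      exact (dadd_cancel_l _ _ _ E).
Qed.

Lemma val_teval_mult rho k t :
  val (teval Msk rho (mult k t)) = gscale k (val (teval Msk rho t)).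
Proof.
  induction k as [|[|k] IH].
  - symmetry. apply gscale_0.
  - symmetry. apply gscale_1, val_range.
  - change (mult (S (S k)) t) with (plus t (mult (S k) t)).
    rewrite gscale_S, <- IH. reflexivity.
Qed.

Lemma val_teval_succn rho n t :
  val (teval Msk rho (succn n t)) = gshift (Z.of_nat n) (val (teval Msk rho t)).
Proof.
  induction n as [|n IH].
  - apply G_ext; cbn [succn]; gsimpl; lia.
  - change (val (teval Msk rho (succn (S n) t))) with (gshift 1 (val (teval Msk rho (succn n t)))).
    rewrite IH. apply G_ext; gsimpl; lia.
Qed.

Lemma neg_C_true : (1 < m)%nat -> true_universal Msk (sk QEx (Neg (C_ m))).
Proof.
  intros Hm. apply sk_neg_forall2_true; [discriminate|cbn; tauto| |].
  - intros v Hv. cbn in Hv. rewrite !in_app_iff in Hv.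
    destruct Hv as [[Hv|[Hv|[]]]|[Hv|[Hv|[]]]];
      try (apply tvars_mult in Hv; destruct Hv as [<-|[]]); auto.
  - assert (H1 : 0 <= 1 < mz) by lia.
    exists (dnst 0 1 1 Z.lt_0_1 H1), (dnst 0 0 1 Z.lt_0_1 (conj (Z.le_refl 0) mz_pos)).
    cbn [feval Imp eqf neqf map aeval Msk Mg]. intros [Hne|Heq].
    + apply Hne, val_inj. rewrite !val_teval_mult. apply G_ext; cbn; try lia.
      rewrite Z.mul_1_r, Z.mul_0_r, Z.mod_same, Z.mod_0_l by lia. reflexivity.
    + apply (f_equal (fun d => gr (val d))) in Heq. cbn in Heq. lia.
Qed.

Lemma neg_D_true n : true_universal Msk (sk QEx (Neg (D_ m n))).
Proof.
  apply sk_neg_forall2_true; [discriminate|cbn; tauto| |].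
  - intros v Hv. cbn in Hv. rewrite !in_app_iff in Hv.
    destruct Hv as [Hv|[Hv|[]]]; [apply tvars_succn in Hv|]; apply tvars_mult in Hv;
      destruct Hv as [<-|[]]; auto.
  - assert (H0 : 0 <= 0 < mz) by lia.
    exists (dnst 0 0 1 Z.lt_0_1 H0), (dnst (Z.of_nat n) 0 1 Z.lt_0_1 H0).
    cbn [feval neqf eqf map aeval Msk Mg]. intros Hne. apply Hne, val_inj.
    rewrite val_teval_succn, !val_teval_mult. apply G_ext; cbn; lia.
Qed.

Lemma X_true : (1 < m)%nat -> models Msk (X_ m).
Proof.
  intros Hm. apply models_CNFs. intros A HA. rewrite map_app, in_app_iff, sk_T' in HA.
  destruct HA as [HA|[<-|[]]]; [apply T'_true, HA|apply neg_C_true, Hm].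
Qed.

Lemma Y_true n : models Msk (Y_ m n).
Proof.
  apply models_CNFs. intros A HA. rewrite map_app, in_app_iff, sk_T' in HA.
  destruct HA as [HA|[<-|[]]]; [apply T'_true, HA|apply neg_D_true].
Qed.

End Model.

Theorem theorem6 :
  forall S : sat_system,
    is_sat_system S -> sound S -> refutationally_complete S ->
    forall n m : nat, 0 < n -> n < m ->
      ~ refutes (ssum S literal_aind2) (X_ m) /\
      ~ refutes (ssum S literal_aind2) (Y_ m n).
Proof.
  intros S _ Hsound _ n m Hn Hnm.
  assert (Hm : 0 < m) by lia.
  assert (Hpres : preserves_truth (ssum S literal_aind2) (Msk m Hm)).
  { apply ssum_preserves_truth.
    - apply sound_preserves_truth, Hsound.
    - apply literal_aind2_preserves_truth. }
  split; apply (model_not_refuted _ (Msk m Hm) _ (dzero m Hm) Hpres).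
  - apply X_true. lia.
  - apply Y_true.
Qed.
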